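(* Let $\Gamma=(N,A,u)$ be a finite normal form game that is standard symmetric, i.e. there exist a matching $M$ of $A_1,\dots,A_n$ and a transitive subgroup $T\le S_N$ such that $M_T\le\operatorname{Aut}(\Gamma)$. Then there exists a matching $M'$ of $A_1,\dots,A_n$ such that for each $s\in M'$, $u_i(s)=u_j(s)$ for all $i,j\in N$.
   Context: A matching of $A_1,\dots,A_n$ is $M\subseteq\times_iA_i$ such that for each $i$ and $a_i\in A_i$ exactly one $s\in M$ has $s_i=a_i$; $M_{ij}:A_i\to A_j$ sends $a_i$ to the unique $a_j$ with some $s\in M$ having $s_i=a_i$, $s_j=a_j$; for $\pi\in S_N$, $M_\pi$ is the game bijection $(\pi;(M_{i\pi(i)})_{i\in N})$ and $M_T=\{M_\pi:\pi\in T\}$. A game bijection $g=(\pi;(\tau_i)_{i\in N})$ of $\Gamma$ ($\pi\in S_N$, bijections $\tau_i:A_i\to A_{\pi(i)}$) acts by $g(i)=\pi(i)$ and $g(s)=(\tau_{\pi^{-1}(j)}(s_{\pi^{-1}(j)}))_{j\in N}$; it is an automorphism if $u_i(s)=u_{g(i)}(g(s))$ for all $i\in N$, $s\in A$; $\operatorname{Aut}(\Gamma)$ is the group of automorphisms. *)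

From HB Require Import structures.
From mathcomp Require Import all_boot all_order all_algebra all_fingroup.
Set Implicit Arguments. Unset Strict Implicit. Unset Printing Implicit Defensive.

Section Games.
Variables (n : nat) (A : 'I_n -> finType).

Definition profile := {dffun forall i : 'I_n, A i}.

Definition is_matching (M : {set profile}) : Prop :=
  forall (i : 'I_n) (a : A i), #|[set s in M | s i == a]| = 1%N.

Lemma matching_ex (M : {set profile}) (hM : is_matching M) i (a : A i) :
  exists s : profile, (s \in M) && (s i == a).
Proof.
have : [set s in M | s i == a] != set0 by rewrite -card_gt0 hM.
case/set0Pn=> s.
by rewrite inE => H; exists s.
Qed.

Definition Mij (M : {set profile}) (hM : is_matching M) (i j : 'I_n)
  (a : A i) : A j := (xchoose (matching_ex hM a)) j.

(* Action of a game bijection g = (pi; (tau_i)) on profiles: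
   g(s)_j = tau_{pi^-1 j} (s_{pi^-1 j}), transported along pi (pi^-1 j) = j. *)
Definition gb_act (pi : {perm 'I_n}) (tau : forall i, A i -> A (pi i))
  (s : profile) : profile :=
  finfun (fun j : 'I_n =>
    ecast k (A k) (permKV pi j) (tau (pi^-1 j)%g (s (pi^-1 j)%g))).

Definition is_automorphism (R : Type) (u : 'I_n -> profile -> R)
  (pi : {perm 'I_n}) (tau : forall i, A i -> A (pi i)) : Prop :=
  (forall i, bijective (tau i)) /\
  (forall (i : 'I_n) (s : profile), u i s = u (pi i) (gb_act tau s)).

Definition M_tau (M : {set profile}) (hM : is_matching M) (pi : {perm 'I_n})
  : forall i, A i -> A (pi i) := fun i => @Mij M hM i (pi i).

Definition standard_symmetric (R : Type) (u : 'I_n -> profile -> R) : Prop :=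
  exists (M : {set profile}) (hM : is_matching M) (T : {group {perm 'I_n}}),
    [transitive T, on [set: 'I_n] | 'P] /\
    forall pi, pi \in T -> is_automorphism u (M_tau hM pi).

End Games.

From HB Require Import structures.
From mathcomp Require Import all_boot all_order all_algebra all_fingroup.

(* The matching M itself works: a profile s in M is the unique member of M
   through any of its coordinates, so every M_pi fixes s.  The automorphism
   property then gives u_i(s) = u_{pi i}(s), and transitivity of T lets pi i
   be any player. *)

Section MatchingFixpoints.
Variables (n : nat) (A : 'I_n -> finType).
Variables (M : {set profile A}) (hM : is_matching M).

Lemma matching_eq {i : 'I_n} {s t : profile A} :
  s \in M -> t \in M -> s i = t i -> s = t.
Proof.
move=> sM tM eq_st.
have [x defx] := cards1P (introT eqP (hM i (s i))).
have : s \in [set y in M | y i == s i] by rewrite inE sM eqxx.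
have : t \in [set y in M | y i == s i] by rewrite inE tM eq_st eqxx.
by rewrite defx !inE => /eqP -> /eqP ->.
Qed.

Lemma Mij_matching (i j : 'I_n) (s : profile A) :
  s \in M -> Mij hM j (s i) = s j.
Proof.
move=> sM; have /andP[tM /eqP ti] := xchooseP (matching_ex hM (s i)).
by rewrite /Mij (matching_eq tM sM ti).
Qed.

Lemma ecast_profile (s : profile A) (k0 k : 'I_n) (e : k0 = k) :
  ecast k (A k) e (s k0) = s k.
Proof. by case: k / e. Qed.

Lemma gb_act_M_tau_fixed (pi : {perm 'I_n}) (s : profile A) :
  s \in M -> gb_act (M_tau hM pi) s = s.
Proof.
move=> sM; apply/ffunP=> j; rewrite ffunE /M_tau Mij_matching //.
exact: ecast_profile.
Qed.

End MatchingFixpoints.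

Theorem corollary5p3 (R : realFieldType) (n : nat) (A : 'I_n -> finType)
  (u : 'I_n -> profile A -> R) :
  standard_symmetric u ->
  exists M' : {set profile A}, is_matching M' /\
    forall s, s \in M' -> forall i j : 'I_n, u i s = u j s.
Proof.
case=> M [hM [T [T_transitive M_T_aut]]].
exists M; split=> // s sM i j.
have : j \in orbit 'P T i by rewrite (atransP T_transitive) ?inE.
case/orbitP=> pi piT <-.
have [_ /(_ i s)] := M_T_aut pi piT.
by rewrite gb_act_M_tau_fixed.
Qed.
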